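(* Fix $t\in[T]$ and suppose $\|\theta^*\|_2\le L_\theta$ and $\|\widehat\theta_t-\theta^*\|_{\Sigma_t}\le\beta_t$. Let $p^*_{s,a,s'}=p(s'\mid s,a,\theta^* )$. Then $p^*\in\mathcal P'_t$, the set of $p\in[0,1]^{\mathcal S\times\mathcal A\times\mathcal S}$ such that for all $(s,a)$: $\sum_{s'\in\mathcal S_{s,a}}p_{s,a,s'}=1$ and $\sum_{s'\in\mathcal S_{s,a}}|p_{s,a,s'}-p(s'\mid s,a,\widehat\theta_t)|\le R_{t,s,a}$, where $R_{t,s,a}=2\beta_t\max_{s'\in\mathcal S_{s,a}}\|\varphi(s,a,s')\|_{\Sigma_t^{-1}}$.
   Context: MNL model: finite $\mathcal S,\mathcal A$; known reachable sets $\mathcal S_{s,a}$ and features $\varphi(s,a,s')\in\mathbb R^d$; $p(s'\mid s,a,\theta)=\exp(\varphi(s,a,s')^\top\theta)/\sum_{s''\in\mathcal S_{s,a}}\exp(\varphi(s,a,s'')^\top\theta)$ for $s'\in\mathcal S_{s,a}$; $\theta^*$ the true parameter. $\widehat\theta_t$ and the positive definite $\Sigma_t=\lambda I_d+\sum_{i<t}\nabla^2\ell_i(\widehat\theta_{i+1})$ are the online estimator's iterates; $\beta_t>0$ is the confidence radius. $\|x\|_A=\sqrt{x^\top Ax}$. *)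

From HB Require Import structures.
From mathcomp Require Import all_boot all_order all_algebra.
From mathcomp Require Import all_classical all_reals all_analysis.
Set Implicit Arguments. Unset Strict Implicit. Unset Printing Implicit Defensive.
Import Order.TTheory GRing.Theory Num.Theory.
Local Open Scope ring_scope.

Section MNL.
Variables (R : realType) (S A : finType) (d : nat).

Definition wnorm (M : 'M[R]_d) (x : 'cV[R]_d) : R :=
  Num.sqrt (((x^T *m M *m x) 0 0)).

Definition norm2 (x : 'cV[R]_d) : R := Num.sqrt ((x^T *m x) 0 0).

Definition posdef (M : 'M[R]_d) : Prop :=
  M^T = M /\ forall x : 'cV[R]_d, x != 0 -> 0 < (x^T *m M *m x) 0 0.

Variables (Sr : S -> A -> {set S}) (phi : S -> A -> S -> 'cV[R]_d).

Definition mnl_prob (theta : 'cV[R]_d) (s : S) (a : A) (s' : S) : R :=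
  if s' \in Sr s a then
    expR (((phi s a s')^T *m theta) 0 0) /
    \sum_(s'' in Sr s a) expR (((phi s a s'')^T *m theta) 0 0)
  else 0.

Definition radius (beta : R) (Sigma : 'M[R]_d) (s : S) (a : A) : R :=
  2 * beta * \big[Num.max/0]_(s' in Sr s a) wnorm (invmx Sigma) (phi s a s').

Definition conf_set (theta_hat : 'cV[R]_d) (beta : R) (Sigma : 'M[R]_d)
  (p : S -> A -> S -> R) : Prop :=
  (forall s a s', 0 <= p s a s' <= 1) /\
  forall s a,
    \sum_(s' in Sr s a) p s a s' = 1 /\
    \sum_(s' in Sr s a) `|p s a s' - mnl_prob theta_hat s a s'|
      <= radius beta Sigma s a.

End MNL.

(* If every logit moves by at most delta, every softmax weight changes by a
   factor in [e^-delta, e^delta], and two such probability vectors are at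
   total-variation distance at most (e^delta - 1)/(e^delta + 1) <= delta.
   For the MNL model the logit gap at s' is phi(s,a,s')^T (theta_hat - theta_star),
   which Cauchy-Schwarz in the Sigma_t geometry bounds by
   beta_t ||phi(s,a,s')||_{Sigma_t^-1}. *)

From Pilot Require Import Defs.
From HB Require Import structures.
From mathcomp Require Import all_boot all_order all_algebra.
From mathcomp Require Import all_classical all_reals all_analysis.
From mathcomp Require Import ring lra.
Import Order.TTheory GRing.Theory Num.Theory.
Local Open Scope ring_scope.

Section TotalVariation.
Context {R : realFieldType}.

Lemma two_point_gap_le (a b c e s : R) :
  0 <= a -> 0 <= b -> 0 <= c -> 0 <= e -> 1 <= s ->
  a <= s * c -> e <= s * b -> 0 < a + b -> 0 < c + e ->
  a / (a + b) - c / (c + e) <= (s - 1) / (s + 1).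
Proof.
move=> a0 b0 c0 e0 s1 ac eb ab ce.
have d1 : 0 < s * s * c + e by nra.
have push_a : a / (a + b) <= s * s * c / (s * s * c + e).
  by rewrite ler_pdivrMr // mulrAC (ler_pdivlMr _ _ d1); nra.
apply: le_trans (lerB push_a (lexx _)) _.
have -> : s * s * c / (s * s * c + e) - c / (c + e)
          = c * e * (s * s - 1) / ((s * s * c + e) * (c + e)).
  by field; rewrite !lt0r_neq0.
have s0 : 0 < s + 1 by lra.
rewrite ler_pdivrMr ?mulr_gt0 // [X in _ <= X]mulrAC ler_pdivlMr // -subr_ge0.
have -> : (s - 1) * ((s * s * c + e) * (c + e)) - c * e * (s * s - 1) * (s + 1)
          = (s - 1) * (s * c - e) ^+ 2 by ring.
by apply: mulr_ge0; [lra | exact: sqr_ge0].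
Qed.

Lemma sum_norm_of_sum0 (I : finType) (D : {set I}) (v : I -> R) :
  \sum_(i in D) v i = 0 ->
  \sum_(i in D) `|v i| = 2 * \sum_(i in D | 0 <= v i) v i.
Proof.
move=> sum0; rewrite (bigID (fun i => 0 <= v i)) /=.
move: sum0; rewrite (bigID (fun i => 0 <= v i)) /= => /eqP.
rewrite addr_eq0 => /eqP neg.
have -> : \sum_(i in D | 0 <= v i) `|v i| = \sum_(i in D | 0 <= v i) v i.
  by apply: eq_bigr => i /andP [_ vi]; rewrite ger0_norm.
have -> : \sum_(i in D | ~~ (0 <= v i)) `|v i| = - \sum_(i in D | ~~ (0 <= v i)) v i.
  by rewrite -sumrN; apply: eq_bigr => i /andP [_]; rewrite -ltNge => /ltr0_norm.
by rewrite -neg mulr_natl mulr2n.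
Qed.

Lemma normalized_l1_le (I : finType) (D : {set I}) (x y : I -> R) (s : R) :
  (0 < #|D|)%N -> 1 <= s ->
  (forall i, i \in D -> 0 < x i) -> (forall i, i \in D -> 0 < y i) ->
  (forall i, i \in D -> x i <= s * y i) -> (forall i, i \in D -> y i <= s * x i) ->
  \sum_(i in D) `|x i / (\sum_(j in D) x j) - y i / (\sum_(j in D) y j)|
    <= 2 * ((s - 1) / (s + 1)).
Proof.
move=> /card_gt0P [i0 i0D] s1 xp yp hxy hyx.
have sum_gt0 (f : I -> R) : (forall i, i \in D -> 0 < f i) -> 0 < \sum_(j in D) f j.
  move=> fp; rewrite (bigD1 i0) //=; apply: ltr_wpDr; last exact: fp.
  by apply: sumr_ge0 => i /andP [iD _]; exact/ltW/fp.
have part_ge0 (f : I -> R) (P : pred I) :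
    (forall i, i \in D -> 0 < f i) -> 0 <= \sum_(i in D | P i) f i.
  by move=> fp; apply: sumr_ge0 => i /andP [iD _]; exact/ltW/fp.
set X := \sum_(j in D) x j; set Y := \sum_(j in D) y j.
have X0 : 0 < X by exact: sum_gt0.
have Y0 : 0 < Y by exact: sum_gt0.
set v := fun i => x i / X - y i / Y.
rewrite (sum_norm_of_sum0 _ D v); last first.
  by rewrite /v sumrB -!mulr_suml !divff ?subrr ?lt0r_neq0.
set P := fun i => 0 <= v i.
have -> : \sum_(i in D | P i) v i
          = (\sum_(i in D | P i) x i) / X - (\sum_(i in D | P i) y i) / Y.
  by rewrite sumrB -!mulr_suml.
rewrite ler_pM2l //.
have splitP (f : I -> R) :
    \sum_(i in D) f i = \sum_(i in D | P i) f i + \sum_(i in D | ~~ P i) f i.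
  exact: bigID.
rewrite /X /Y !(splitP x) !(splitP y) in X0 Y0 *.
apply: two_point_gap_le => //; rewrite ?part_ge0 //.
- by rewrite mulr_sumr; apply: ler_sum => i /andP [iD _]; exact: hxy.
- by rewrite mulr_sumr; apply: ler_sum => i /andP [iD _]; exact: hyx.
Qed.

End TotalVariation.

Section PositiveDefiniteForm.
Context {R : realType} {d : nat} (M : 'M[R]_d).
Hypothesis M_posdef : posdef M.

Definition mxform (u v : 'cV[R]_d) : R := (u^T *m M *m v) 0 0.

Lemma mxformC u v : mxform u v = mxform v u.
Proof.
rewrite /mxform -[in LHS](trmxK (u^T *m M *m v)) [in LHS]mxE.
by rewrite !trmx_mul trmxK M_posdef.1 mulmxA.
Qed.

Lemma mxform_ge0 u : 0 <= mxform u u.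
Proof.
have [->|u_neq0] := eqVneq u 0; first by rewrite /mxform mulmx0 mxE.
exact/ltW/M_posdef.2.
Qed.

Lemma mxform_subZ u v (l : R) :
  mxform (u - l *: v) (u - l *: v)
  = mxform u u - 2 * l * mxform u v + l ^+ 2 * mxform v v.
Proof.
have vu := mxformC v u; rewrite /mxform in vu *; rewrite !mxE in vu.
have -> : (u - l *: v)^T = u^T - l *: v^T by rewrite linearB /= linearZ.
rewrite !mulmxBl !mulmxBr -!scalemxAl -!scalemxAr !mxE vu.
by rewrite expr2; ring.
Qed.

Lemma mxform_cauchy_schwarz u v : mxform u v ^+ 2 <= mxform u u * mxform v v.
Proof.
have [->|v_neq0] := eqVneq v 0.
  by rewrite /mxform !mulmx0 !mxE expr0n /= mulr0.
have vv_gt0 : 0 < mxform v v by exact: M_posdef.2.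
have := mxform_ge0 (u - (mxform u v / mxform v v) *: v).
rewrite mxform_subZ.
have -> : mxform u u - 2 * (mxform u v / mxform v v) * mxform u v
          + (mxform u v / mxform v v) ^+ 2 * mxform v v
          = mxform u u - mxform u v ^+ 2 / mxform v v.
  by field; exact: lt0r_neq0.
by rewrite subr_ge0 ler_pdivrMr.
Qed.

Lemma posdef_unitmx : M \in unitmx.
Proof.
rewrite -row_free_unit; apply: inj_row_free => v vM0.
apply/eqP; apply: contraT => v_neq0.
have vT_neq0 : v^T != 0 by apply: contra v_neq0 => /eqP vT0; rewrite -(trmxK v) vT0 trmx0.
by have := M_posdef.2 _ vT_neq0; rewrite trmxK vM0 mul0mx mxE ltxx.
Qed.

(* Cauchy-Schwarz for the M-form applied to M^-1 p and x. *)
Lemma dot_le_wnorm (p x : 'cV[R]_d) :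
  `|(p^T *m x) 0 0| <= wnorm (invmx M) p * wnorm M x.
Proof.
have invM_sym : (invmx M)^T = invmx M by rewrite trmx_inv M_posdef.1.
have cancel_inv : (invmx M *m p)^T *m M = p^T.
  by rewrite trmx_mul invM_sym -mulmxA (mulVmx posdef_unitmx) mulmx1.
have px : mxform (invmx M *m p) x = (p^T *m x) 0 0 by rewrite /mxform cancel_inv.
have pp : mxform (invmx M *m p) (invmx M *m p) = (p^T *m invmx M *m p) 0 0.
  by rewrite /mxform cancel_inv mulmxA.
have := mxform_cauchy_schwarz (invmx M *m p) x; rewrite px pp => cs.
rewrite /wnorm -sqrtrM; last by rewrite -pp mxform_ge0.
by rewrite -sqrtr_sqr; exact: ler_wsqrtr.
Qed.

End PositiveDefiniteForm.

Section Softmax.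
Context {R : realType} {I : finType} (D : {set I}).
Hypothesis D_neq0 : (0 < #|D|)%N.

Lemma expR_sub1_div_add1_le (x : R) : 0 <= x -> (expR x - 1) / (expR x + 1) <= x.
Proof.
move=> x_ge0; have ex_gt0 := expR_gt0 x.
have ex_inv : expR (- x) * expR x = 1 by rewrite expRN mulVf // gt_eqF.
have := expR_ge1Dx (- x).
by rewrite ler_pdivrMr; nra.
Qed.

Definition softmax (f : I -> R) (i : I) : R :=
  expR (f i) / \sum_(j in D) expR (f j).

Lemma sum_expR_gt0 (f : I -> R) : 0 < \sum_(j in D) expR (f j).
Proof.
have /card_gt0P [i0 i0D] := D_neq0.
rewrite (bigD1 i0) //=; apply: ltr_wpDr; last exact: expR_gt0.
by apply: sumr_ge0 => i _; exact: expR_ge0.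
Qed.

Lemma softmax_ge0 f i : 0 <= softmax f i.
Proof. by rewrite divr_ge0 ?expR_ge0 ?sumr_ge0 // => j _; exact: expR_ge0. Qed.

Lemma softmax_le1 f i : i \in D -> softmax f i <= 1.
Proof.
move=> iD; rewrite ler_pdivrMr ?sum_expR_gt0 // mul1r (bigD1 i) //= lerDl.
by apply: sumr_ge0 => j _; exact: expR_ge0.
Qed.

Lemma sum_softmax f : \sum_(i in D) softmax f i = 1.
Proof. by rewrite -mulr_suml divff // lt0r_neq0 ?sum_expR_gt0. Qed.

Lemma softmax_l1_le (f g : I -> R) (delta : R) :
  (forall i, i \in D -> `|f i - g i| <= delta) ->
  \sum_(i in D) `|softmax f i - softmax g i| <= 2 * delta.
Proof.
move=> fg_close.
have delta_ge0 : 0 <= delta.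
  by have /card_gt0P [i0 i0D] := D_neq0; exact: le_trans (fg_close _ i0D).
have ratio_le (h k : I -> R) : (forall i, i \in D -> `|h i - k i| <= delta) ->
    forall i, i \in D -> expR (h i) <= expR delta * expR (k i).
  move=> hk i iD; rewrite -expRD ler_expR.
  by have := hk i iD; rewrite ler_norml => /andP [_ ?]; lra.
apply: le_trans (@normalized_l1_le _ _ D _ _ (expR delta) D_neq0 _ _ _ _ _) _.
- by rewrite -expR0 ler_expR.
- by move=> i _; exact: expR_gt0.
- by move=> i _; exact: expR_gt0.
- exact: ratio_le.
- by apply: ratio_le => i iD; rewrite distrC fg_close.
- by rewrite ler_pM2l // expR_sub1_div_add1_le.
Qed.

End Softmax.

Lemma mnl_probE (R : realType) (S A : finType) (d : nat)
    (Sr : S -> A -> {set S}) (phi : S -> A -> S -> 'cV[R]_d) theta s a s' :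
  s' \in Sr s a ->
  mnl_prob Sr phi theta s a s'
  = softmax (Sr s a) (fun i => ((phi s a i)^T *m theta) 0 0) s'.
Proof. by rewrite /mnl_prob => ->. Qed.

Theorem lemma16 (R : realType) (S A : finType) (d : nat)
  (Sr : S -> A -> {set S}) (phi : S -> A -> S -> 'cV[R]_d)
  (theta_star : 'cV[R]_d) (L_theta : R)
  (theta_hat : nat -> 'cV[R]_d) (Sigma : nat -> 'M[R]_d) (beta : nat -> R)
  (T t : nat) :
  (forall s a, (0 < #|Sr s a|)%N) ->
  (forall i, posdef (Sigma i)) ->
  (forall i, 0 < beta i) ->
  (1 <= t <= T)%N ->
  norm2 theta_star <= L_theta ->
  wnorm (Sigma t) (theta_hat t - theta_star) <= beta t ->
  conf_set Sr phi (theta_hat t) (beta t) (Sigma t) (mnl_prob Sr phi theta_star).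
Proof.
move=> Sr_neq0 Sigma_posdef _ _ _ hat_close.
split=> [s a s' | s a].
  have [inS | notinS] := boolP (s' \in Sr s a).
    by rewrite mnl_probE // softmax_ge0 softmax_le1.
  by rewrite /mnl_prob (negbTE notinS) lexx ler01.
split.
  by under eq_bigr => i iS do rewrite mnl_probE //; exact: sum_softmax.
under eq_bigr => i iS do rewrite !mnl_probE //.
rewrite /Defs.radius -mulrA; apply: softmax_l1_le => // i iS.
have -> : ((phi s a i)^T *m theta_star) 0 0 - ((phi s a i)^T *m theta_hat t) 0 0
          = - ((phi s a i)^T *m (theta_hat t - theta_star)) 0 0.
  by rewrite mulmxBr !mxE opprB.
rewrite normrN; apply: le_trans (dot_le_wnorm _ (Sigma_posdef t) _ _) _.
rewrite mulrC ler_pM ?sqrtr_ge0 //.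
exact: (le_bigmax_cond _ _ (P := fun j => j \in Sr s a)).
Qed.
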